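(* Let $q$ be a prime power, $l\ge1$, $t=q^l$, and $L_6=\{\alpha\in GF(t^2):\ \alpha^{t+1}+1\ne0\}=\{\alpha_1,\dots,\alpha_n\}$. For integers $e\ge0$, $s\ge1$ let $R(e,s)\in GF(t^2)^n$ be the row vector with $k$-th entry $\alpha_k^e/(\alpha_k^{t+1}+1)^s$ (with $0^0=1$). Let $f\in\{1,\dots,q-1\}$ and $c\in GF(q)^n$. If $c\cdot R(t-ft/q,\,1)=0$ and $c\cdot R((f-j)t+q-j,\,q-1)=0$ for all $j=1,\dots,f$, then $c\cdot R(ft/q+1,\,1)=0$. (That is, the row $R(ft/q+1,1)$ of the parity-check matrix is obtained, for $q$-ary codes, from the row $R(t-ft/q,1)$ and the auxiliary rows $R((f-j)t+q-j,q-1)$, $j=1,\dots,f$.)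
   Context: Here $u\cdot v=\sum_k u_kv_k$. In the paper these rows belong to parity-check matrices of the $q$-ary Goppa codes $\Gamma(L_6,(x^{t+1}+1)^j)$, which consist of $c\in GF(q)^n$ with $c\cdot R(e,s)=0$ for $1\le s\le j$, $0\le e\le t$. *)

From mathcomp Require Import all_boot all_algebra.
Set Implicit Arguments. Unset Strict Implicit. Unset Printing Implicit Defensive.
Import GRing.Theory.
Local Open Scope ring_scope.

Definition inL6 (F : finFieldType) (t : nat) (a : F) : bool :=
  a ^+ t.+1 + 1 != 0.

(* The codeword c is indexed by the elements of L6 (a function on F, only its
   values on L6 matter). Note x ^+ 0 = 1, so 0^0 = 1. *)
Definition dotR (F : finFieldType) (t : nat) (c : F -> F) (e s : nat) : F :=
  \sum_(a : F | inL6 t a) c a * a ^+ e / (a ^+ t.+1 + 1) ^+ s.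

Definition over_GFq (F : finFieldType) (t q : nat) (c : F -> F) : Prop :=
  forall a : F, inL6 t a -> c a ^+ q = c a.

From mathcomp Require Import all_boot all_algebra all_field.
From mathcomp Require Import ring zify.
Import GRing.Theory.
Local Open Scope ring_scope.

(* Write N(a) = a^(t+1) + 1.  Raising c.R(e,s) to a power n of the
   characteristic fixes the GF(q)-valued c and gives c.R(n e, n s).  On GF(t^2)
   the exponent of a may be reduced modulo t^2 - 1, and N(a) lies in GF(t), so
   N(a)^t = N(a).  With n = t q this turns the hypothesis on R(t - f t/q, 1)
   into c.R(q - f, q) = 0, and with n = q the goal becomes
   c.R(f (t+1) + q - f, q) = 0.  Since a^(t+1) = N(a) - 1,
   R((k+1)(t+1) + e, s+1) = R(k(t+1) + e, s) - R(k(t+1) + e, s+1),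
   and the auxiliary rows are exactly the R(k(t+1) + q - f, q - 1), k < f,
   so induction on f finishes the proof. *)

Lemma pchar_natX (R : nzSemiRingType) (p k : nat) :
  p \in [pchar R] -> [pchar R].-nat (p ^ k)%N.
Proof.
by move=> chRp; rewrite pnatX (eq_pnat _ (pcharf_eq chRp)) pnat_id ?(pcharf_prime chRp).
Qed.

Lemma expr_sum_pchar (R : comNzSemiRingType) (I : Type) (r : seq I) (P : pred I)
    (E : I -> R) (n : nat) :
  [pchar R].-nat n -> (\sum_(i <- r | P i) E i) ^+ n = \sum_(i <- r | P i) E i ^+ n.
Proof.
move=> chRn; apply: (big_morph (fun x : R => x ^+ n)) => [x y|].
  exact: exprDn_pchar.
by move: chRn => /andP[n_gt0 _]; rewrite expr0n gtn_eqF.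
Qed.

Section Rows.
Context {F : finFieldType} {t : nat} {c : F -> F}.

Lemma expr_dotR (n e s : nat) :
  [pchar F].-nat n -> (forall a, inL6 t a -> c a ^+ n = c a) ->
  dotR t c e s ^+ n = dotR t c (e * n) (s * n).
Proof.
move=> chFn cn; rewrite /dotR expr_sum_pchar //; apply: eq_bigr => a La.
by rewrite expr_div_n exprMn cn // -!exprM.
Qed.

Lemma dotR_recur (k e s : nat) :
  dotR t c (k.+1 * t.+1 + e) s.+1 =
  dotR t c (k * t.+1 + e) s - dotR t c (k * t.+1 + e) s.+1.
Proof.
rewrite /dotR -sumrB; apply: eq_bigr => a; rewrite /inL6 => N_neq0.
rewrite mulSn -addnA exprD; set u := a ^+ t.+1 in N_neq0 *.
by rewrite !exprS; field; rewrite expf_neq0 ?N_neq0.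
Qed.

Lemma dotR_vanish_shift (f e s : nat) :
  (forall k, (k < f)%N -> dotR t c (k * t.+1 + e) s = 0) ->
  dotR t c e s.+1 = 0 -> dotR t c (f * t.+1 + e) s.+1 = 0.
Proof.
elim: f => [|f IHf] Rk0 Re0; first by rewrite mul0n.
rewrite dotR_recur Rk0 // IHf ?subr0 // => k k_lt_f.
by apply: Rk0; apply: ltnW.
Qed.

Context {q l : nat}.
Hypotheses (t_eq : t = (q ^ l.+1)%N) (chFq : [pchar F].-nat q) (cq : over_GFq t q c).

Lemma over_GFq_expn (k : nat) (a : F) : inL6 t a -> c a ^+ (q ^ k) = c a.
Proof.
move=> La; elim: k => [|k IHk]; first by rewrite expr1.
by rewrite expnSr exprM IHk cq.
Qed.

Lemma expr_dotR_shift (f : nat) :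
  (f <= q)%N -> dotR t c (f * q ^ l + 1) 1 ^+ q = dotR t c (f * t.+1 + (q - f)) q.
Proof.
move=> f_le_q; rewrite expr_dotR // mul1n; congr dotR.
by rewrite t_eq expnSr; nia.
Qed.

Hypotheses (card_F : #|F| = (t * t)%N) (chFt : [pchar F].-nat t).

Lemma dotR_reduce_exp (e s : nat) : dotR t c (t * t * e) s = dotR t c e s.
Proof.
by apply: eq_bigr => a _; rewrite exprM -card_F expf_card.
Qed.

Lemma dotR_reduce_denom (e s : nat) : dotR t c e (t * s) = dotR t c e s.
Proof.
apply: eq_bigr => a _; congr (_ / _).
rewrite exprM exprDn_pchar // expr1n -exprM mulSn exprD -card_F expf_card.
by rewrite exprSr.
Qed.

Lemma dotR_frobenius_vanish (e : nat) : dotR t c (q ^ l * e) 1 = 0 -> dotR t c e q = 0.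
Proof.
move=> R0; have tq : (t * q = q ^ l.+2)%N by rewrite t_eq -expnSr.
have : dotR t c (q ^ l * e) 1 ^+ (t * q) = 0.
  by rewrite R0 expr0n gtn_eqF // tq expn_gt0; case/andP: chFq => ->.
rewrite expr_dotR; last 2 first.
- by rewrite tq pnatX chFq.
- by move=> a; rewrite tq; apply: over_GFq_expn.
have -> : (q ^ l * e * (t * q) = t * t * e)%N by rewrite t_eq expnSr; nia.
by rewrite dotR_reduce_exp // mul1n dotR_reduce_denom.
Qed.

End Rows.

Theorem lemma8 (p m l : nat) (F : finFieldType) (f : nat) (c : F -> F) :
  prime p -> (0 < m)%N -> (0 < l)%N ->
  #|F| = (((p ^ m) ^ l) ^ 2)%N ->
  (1 <= f <= p ^ m - 1)%N ->
  over_GFq ((p ^ m) ^ l) (p ^ m) c ->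
  dotR ((p ^ m) ^ l) c ((p ^ m) ^ l - f * (p ^ m) ^ l.-1) 1 = 0 ->
  (forall j : nat, (1 <= j <= f)%N ->
     dotR ((p ^ m) ^ l) c ((f - j) * (p ^ m) ^ l + (p ^ m - j)) (p ^ m - 1) = 0) ->
  dotR ((p ^ m) ^ l) c (f * (p ^ m) ^ l.-1 + 1) 1 = 0.
Proof.
move=> p_pr m_gt0 l_gt0 card_F /andP[f_gt0 f_lt_q] cq R0 Raux.
have chFp : p \in [pchar F].
  by apply: (card_finPcharP _ p_pr); rewrite card_F -!expnM.
have q_gt1 : (1 < p ^ m)%N by rewrite -(expn0 p) ltn_exp2l ?prime_gt1.
set q := (p ^ m)%N in q_gt1 card_F f_lt_q cq R0 Raux *.
set t := (q ^ l)%N in card_F cq R0 Raux *.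
have t_eq : t = (q ^ l.-1.+1)%N by rewrite prednK.
have chFq : [pchar F].-nat q by apply: pchar_natX.
have chFt : [pchar F].-nat t by rewrite /t -expnM pchar_natX.
have card_t : #|F| = (t * t)%N by rewrite card_F mulnn.
have R_q_f : dotR t c (q - f) q = 0.
  apply: (dotR_frobenius_vanish t_eq chFq cq card_t chFt); rewrite -R0; congr dotR.
  by rewrite t_eq expnSr; nia.
suff : dotR t c (f * q ^ l.-1 + 1) 1 ^+ q = 0.
  by move/eqP; rewrite expf_eq0 => /andP[_ /eqP].
have q_eq : q = (q - 1).+1 by lia.
rewrite (expr_dotR_shift t_eq chFq cq); last by lia.
rewrite [X in dotR _ _ _ X]q_eq; apply: dotR_vanish_shift => [k k_lt_f|]; last first.
  by rewrite -q_eq.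
have -> : (k * t.+1 + (q - f) = (f - (f - k)) * t + (q - (f - k)))%N.
  by rewrite (subKn (ltnW k_lt_f)) mulnS; lia.
by apply: Raux; lia.
Qed.
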